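(* Let $f:[-1,1]\to\mathbb{R}$, $\epsilon_0>0$, and let $P_k:[-1,1]\to\mathbb{C}$ be a degree-$k$ polynomial with $\max_{x\in[-1,1]}|f(x)-P_k(x)|\le\epsilon_0$. Let $\gamma:=\max_{x\in[-1,1]}|f(x)|$. Let $\ket{\psi}=\sum_{j=1}^N\psi_j\ket{j}$ with $\psi_j\in\mathbb{R}$ and $\|\ket{\psi}\|_2=1$, and let $\mathcal{N}^2:=\sum_j|f(\psi_j)|^2>0$, $\mathcal{N}_1^2:=\sum_j|P_k(\psi_j)|^2$. Let $\epsilon\in(0,1]$ and $$\Delta_k:=\Big\|\frac{1}{\mathcal{N}}\sum_j f(\psi_j)\ket{j}-\frac{1}{\mathcal{N}_1}\sum_jP_k(\psi_j)\ket{j}\Big\|_2.$$ If $\epsilon_0\le\epsilon\mathcal{N}^2/(8\gamma N)$, then $\Delta_k\le\epsilon$. *)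

From mathcomp Require Import all_boot all_order all_algebra.
From mathcomp Require Import complex.
Set Implicit Arguments. Unset Strict Implicit. Unset Printing Implicit Defensive.
Import Order.TTheory GRing.Theory Num.Theory.
Local Open Scope ring_scope.

Definition csq (R : rcfType) (z : R[i]) : R := complex.Re z ^+ 2 + complex.Im z ^+ 2.

Definition inI (R : rcfType) (x : R) : Prop := -1 <= x <= 1.

From mathcomp Require Import all_boot all_order all_algebra.
From mathcomp Require Import complex.
From mathcomp Require Import ring lra.
Set Implicit Arguments. Unset Strict Implicit. Unset Printing Implicit Defensive.
Import Order.TTheory GRing.Theory Num.Theory.
Local Open Scope ring_scope.
Local Open Scope complex_scope.

(* Write a_j = f(psi_j), p_j = P_k(psi_j), and A = ||a||, B = ||p|| for the
   normalisations of the two states.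
   Expanding the squares gives the identity
     ||a/A - p/B||^2 * A B = ||a - p||^2 - (A - B)^2,
   which at once yields the reverse triangle inequality |A - B| <= ||a - p||
   and, as soon as ||a - p|| <= A/2 (so that B >= A/2), the bound
     ||a/A - p/B||^2 <= 2 ||a - p||^2 / A^2.
   Pointwise, ||a - p||^2 <= N eps0^2 and A^2 <= N gamma^2, and the hypothesis
   on eps0 is exactly what makes 64 ||a - p||^2 <= eps^2 A^2. *)

Section SquaredModulus.
Variable R : rcfType.
Implicit Types (x b : R) (z : R[i]).

Lemma csq_ge0 z : 0 <= csq z.
Proof. by rewrite addr_ge0 ?sqr_ge0. Qed.

Lemma csq_eq0 z : csq z = 0 -> z = 0.
Proof.
case: z => u v; rewrite /csq /= => /eqP; rewrite paddr_eq0 ?sqr_ge0 // !sqrf_eq0.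
by case/andP=> /eqP-> /eqP->.
Qed.

Lemma csq_realB x z : csq (x%:C - z) = x ^+ 2 - 2 * x * complex.Re z + csq z.
Proof. by case: z => u v; rewrite /csq /=; ring. Qed.

Lemma divr_realC z b : z / b%:C = (complex.Re z / b) +i* (complex.Im z / b).
Proof.
case: z => u v; rewrite -fmorphV /=.
by apply/eqP; rewrite eq_complex /=; apply/andP; split; apply/eqP; ring.
Qed.

Lemma csq_divr_realC z b : csq (z / b%:C) = csq z / b ^+ 2.
Proof. by rewrite divr_realC /csq /= !expr_div_n mulrDl. Qed.

End SquaredModulus.

Lemma normalized_sqdist_le (R : realFieldType) (A B S d : R) :
  0 < A -> 0 <= B -> 0 <= S -> S * (A * B) = d - (A - B) ^+ 2 ->
  4 * d <= A ^+ 2 -> S * A ^+ 2 <= 2 * d.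
Proof.
move=> A_gt0 B_ge0 S_ge0 dist_eq small_d.
have gap_le : (A - B) ^+ 2 <= d by rewrite -subr_ge0 -dist_eq !mulr_ge0 // ltW.
have A_le_2B : A <= 2 * B.
  rewrite leNgt; apply/negP => lt2B.
  have : A ^+ 2 < (2 * (A - B)) ^+ 2 by rewrite ltrXn2r ?(ltW A_gt0) //; lra.
  rewrite exprMn -natrX; lra.
apply: le_trans (ler_wpM2l S_ge0 (ler_wpM2l (ltW A_gt0) A_le_2B)) _.
have -> : S * (A * (2 * B)) = 2 * (S * (A * B)) by ring.
rewrite dist_eq; have := sqr_ge0 (A - B); lra.
Qed.

Section NormalizedDistance.
Variables (R : rcfType) (N : nat) (a : 'I_N -> R) (p : 'I_N -> R[i]).
Variables (A B : R).
Hypotheses (A_gt0 : 0 < A) (normA : A ^+ 2 = \sum_j a j ^+ 2).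
Hypotheses (B_ge0 : 0 <= B) (normB : B ^+ 2 = \sum_j csq (p j)).

(* Also valid for [B = 0]: then [p = 0], and both sides vanish. *)
Lemma sqdist_normalized :
  (\sum_j csq ((a j)%:C / A%:C - p j / B%:C)) * (A * B)
    = \sum_j csq ((a j)%:C - p j) - (A - B) ^+ 2.
Proof.
move: B_ge0 normB; rewrite le_eqVlt => /predU1P[<- | B_gt0] normB0.
  have p0 j : p j = 0.
    apply: csq_eq0; move/esym: normB0; rewrite expr0n /=.
    by move/psumr_eq0P; apply=> // i _; apply: csq_ge0.
  rewrite !mulr0 subr0 normA; apply/esym/eqP; rewrite subr_eq0; apply/eqP.
  by apply: eq_bigr => j _; rewrite p0 subr0 /csq /= expr0n addr0.
have [A_neq0 B_neq0] := (gt_eqF A_gt0, gt_eqF B_gt0).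
pose X := \sum_j a j * complex.Re (p j).
have -> : \sum_j csq ((a j)%:C / A%:C - p j / B%:C) = A^-1 ^+ 2 * \sum_j a j ^+ 2
    - 2 * A^-1 * B^-1 * X + B^-1 ^+ 2 * \sum_j csq (p j).
  rewrite /X !mulr_sumr -sumrN -!big_split /=; apply: eq_bigr => j _.
  rewrite -fmorph_div csq_realB csq_divr_realC divr_realC /=.
  by field; rewrite A_neq0 B_neq0.
have -> : \sum_j csq ((a j)%:C - p j)
    = \sum_j a j ^+ 2 - 2 * X + \sum_j csq (p j).
  rewrite /X mulr_sumr -sumrN -!big_split /=; apply: eq_bigr => j _.
  by rewrite csq_realB; ring.
by rewrite -normA -normB0; field; rewrite A_neq0 B_neq0.
Qed.

Lemma sqrt_sqdist_normalized_le (eps : R) :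
  0 < eps <= 1 -> 4 * \sum_j csq ((a j)%:C - p j) <= eps ^+ 2 * A ^+ 2 ->
  Num.sqrt (\sum_j csq ((a j)%:C / A%:C - p j / B%:C)) <= eps.
Proof.
move=> /andP[eps_gt0 eps_le1]; have := sqdist_normalized.
set S := \sum_j _; set d := \sum_j _ => dist_eq small_d.
have S_ge0 : 0 <= S by apply: sumr_ge0 => j _; apply: csq_ge0.
have epsA_le : eps ^+ 2 * A ^+ 2 <= A ^+ 2.
  by rewrite ler_piMl ?sqr_ge0 ?exprn_ile1 ?(ltW eps_gt0).
have epsA_ge0 : 0 <= eps ^+ 2 * A ^+ 2 by rewrite mulr_ge0 ?sqr_ge0.
have S_le : S * A ^+ 2 <= 2 * d.
  by apply: normalized_sqdist_le A_gt0 B_ge0 S_ge0 dist_eq _; lra.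
have S_le_eps2 : S <= eps ^+ 2.
  by rewrite -(ler_pM2r (exprn_gt0 2 A_gt0)); lra.
apply: le_trans (ler_wsqrtr S_le_eps2) _.
by rewrite sqrtr_sqr ger0_norm // ltW.
Qed.

End NormalizedDistance.

Lemma ler_sum_const (R : numDomainType) (N : nat) (F : 'I_N -> R) (c : R) :
  (forall j, F j <= c) -> \sum_j F j <= N%:R * c.
Proof.
move=> F_le; apply: le_trans (ler_sum _ (fun j _ => F_le j)) _.
by rewrite sumr_const card_ord mulr_natl.
Qed.

Lemma unit_vector_coord_inI (R : rcfType) (N : nat) (x : 'I_N -> R) :
  \sum_j x j ^+ 2 = 1 -> forall j, inI (x j).
Proof.
move=> unit_x j; have sq_le1 : x j ^+ 2 <= 1.
  rewrite -unit_x (bigD1 j) //= lerDl; apply: sumr_ge0 => i _; exact: sqr_ge0.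
by apply/andP; split; nra.
Qed.

Lemma sqdist_budget (R : realFieldType) (n gamma eps0 eps d Nsq : R) :
  0 <= n -> 0 <= gamma -> 0 < eps0 -> 0 <= eps -> 0 < Nsq ->
  d <= n * eps0 ^+ 2 -> Nsq <= n * gamma ^+ 2 ->
  eps0 <= eps * Nsq / (8 * gamma * n) -> 64 * d <= eps ^+ 2 * Nsq.
Proof.
move=> n_ge0 gamma_ge0 eps0_gt0 eps_ge0 Nsq_gt0 d_le Nsq_le eps0_le.
have den_gt0 : 0 < 8 * gamma * n.
  rewrite lt_def !mulr_ge0 // andbT; apply: contraTneq eps0_le => ->.
  by rewrite invr0 mulr0 -ltNge.
rewrite ler_pdivlMr // in eps0_le.
have sq_le : (eps0 * (8 * gamma * n)) ^+ 2 <= (eps * Nsq) ^+ 2.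
  by rewrite lerXn2r // nnegrE !mulr_ge0 // ltW.
have dNsq_le : d * Nsq <= (n * eps0 ^+ 2) * (n * gamma ^+ 2).
  apply: le_trans (ler_wpM2r (ltW Nsq_gt0) d_le) _.
  by rewrite ler_wpM2l // mulr_ge0 // sqr_ge0.
rewrite -(ler_pM2r Nsq_gt0); lra.
Qed.

Theorem lemma13 (R : rcfType) (f : R -> R) (eps0 : R) (k : nat)
    (P : {poly R[i]}) (gamma : R) (N : nat) (psi : 'I_N -> R) (eps : R) :
  0 < eps0 ->
  (size P).-1 = k ->
  (forall x, inI x -> Num.sqrt (csq ((f x)%:C - P.[x%:C])%C) <= eps0) ->
  (exists2 x0, inI x0 & `|f x0| = gamma) ->
  (forall x, inI x -> `|f x| <= gamma) ->
  \sum_(j < N) psi j ^+ 2 = 1 ->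
  let Nsq := \sum_(j < N) f (psi j) ^+ 2 in
  let Nsq1 := \sum_(j < N) csq P.[(psi j)%:C] in
  0 < Nsq ->
  0 < eps <= 1 ->
  eps0 <= eps * Nsq / (8 * gamma * N%:R) ->
  Num.sqrt (\sum_(j < N)
      csq (((f (psi j))%:C / (Num.sqrt Nsq)%:C)
           - P.[(psi j)%:C] / (Num.sqrt Nsq1)%:C)%C) <= eps.
Proof.
move=> eps0_gt0 _ approx [x0 _ <-] f_le unit_psi Nsq Nsq1 Nsq_gt0 eps_01 eps0_le.
have psiI := unit_vector_coord_inI unit_psi.
set d := \sum_j csq ((f (psi j))%:C - P.[(psi j)%:C]).
have d_le : d <= N%:R * eps0 ^+ 2.
  apply: ler_sum_const => j; rewrite -[csq _]sqr_sqrtr ?csq_ge0 //.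
  by apply: lerXn2r; rewrite ?nnegrE ?sqrtr_ge0 ?(ltW eps0_gt0) ?approx.
have Nsq_le : Nsq <= N%:R * `|f x0| ^+ 2.
  apply: ler_sum_const => j.
  by rewrite -real_normK ?num_real // lerXn2r ?nnegrE ?f_le.
have budget : 64 * d <= eps ^+ 2 * Nsq := sqdist_budget (ler0n _ N)
  (normr_ge0 _) eps0_gt0 (ltW (andP eps_01).1) Nsq_gt0 d_le Nsq_le eps0_le.
have d_ge0 : 0 <= d by apply: sumr_ge0 => j _; apply: csq_ge0.
apply: sqrt_sqdist_normalized_le => //.
- by rewrite sqrtr_gt0.
- by rewrite sqr_sqrtr // ltW.
- exact: sqrtr_ge0.
- by rewrite sqr_sqrtr // sumr_ge0 // => j _; apply: csq_ge0.
- by rewrite -/d sqr_sqrtr; [lra | exact: ltW].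
Qed.
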